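(* Let $G=(V,E)$ be a connected graph with maximum degree $\Delta\ge 2$, $s\in V$, $\mathcal{T}$ the layering tree of $G$ with respect to $s$, and $\ell\ge\ell(\mathcal{T})$ an integer. Let $P$ be a part of $\mathcal{T}$ at depth $k$ and let $i\ge k$. Then $|\mathrm{comp}(P)\cap L_{\le i}|\le \Delta^{\ell+i-k+2}$.
   Context: For a connected graph $G$ and root $s\in V(G)$, the BFS layers are $L_i=\{v: d_G(s,v)=i\}$ for $i\ge 0$, with $L_{\le k}=L_0\cup\dots\cup L_k$, $L_{\ge k}=\bigcup_{j\ge k}L_j$, $L_{-1}=\emptyset$. For each $i\ge 0$, let $S_i^1,\dots,S_i^{s_i}$ be the connected components of $G\setminus L_{\le i-1}$ (i.e. of $G[L_{\ge i}]$), and let $P_i^j=S_i^j\cap L_i$; the nonempty sets $P_i^j$ are the parts at layer (depth) $i$, and the set $\mathcal{P}$ of all parts over all layers partitions $V(G)$. The layering tree $\mathcal{T}=(\mathcal{P},\mathcal{E})$ has the parts as vertices, with $(P,P')\in\mathcal{E}$ iff some $u\in P$, $u'\in P'$ are adjacent in $G$; it is rooted at $\{s\}$. Its length is $\ell(\mathcal{T})=\max_{P\in\mathcal{P}}\max_{u,v\in P} d_G(u,v)$ (distances measured in $G$). For a part $P$, $\mathrm{comp}(P)$ is the union of $P$ and all parts that are descendants of $P$ in the rooted tree $\mathcal{T}$; if $P$ is at layer $k$, this is the connected component of $G\setminus L_{\le k-1}$ containing $P$. *)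

(* finite simple graphs as symmetric irreflexive relations. *)
From mathcomp Require Import all_boot.
Set Implicit Arguments. Unset Strict Implicit. Unset Printing Implicit Defensive.

Section Layering.
Variables (T : finType) (e : rel T).

Fixpoint ball (n : nat) (u : T) : {set T} :=
  if n is m.+1 then ball m u :|: [set y | [exists x in ball m u, e x y]]
  else [set u].

(* graph distance d_G(u,v) (in a connected graph it is < #|T|) *)
Definition dist (u v : T) : nat := find (fun n => v \in ball n u) (iota 0 #|T|).

Definition max_degree : nat := \max_(v : T) #|[set w | e v w]|.

Variable s : T.

Definition layer (i : nat) : {set T} := [set v | dist s v == i].
Definition layer_le (i : nat) : {set T} := [set v | dist s v <= i].
Definition layer_ge (i : nat) : {set T} := [set v | i <= dist s v].

Definition restr (k : nat) : rel T :=
  [rel a b | [&& e a b, a \in layer_ge k & b \in layer_ge k]].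

(* P is a part at layer k: P = S cap L_k, S a component of G[L_{>=k}], P nonempty *)
Definition is_part (k : nat) (P : {set T}) : Prop :=
  exists2 x, x \in layer k & P = [set y in layer k | connect (restr k) x y].

Definition part_comp (k : nat) (P : {set T}) : {set T} :=
  [set y | [exists x in P, connect (restr k) x y]].

Definition same_part (u v : T) : bool :=
  (dist s u == dist s v) && connect (restr (dist s u)) u v.

Definition layering_length : nat :=
  \max_(u : T) \max_(v | same_part u v) dist u v.

End Layering.

From mathcomp Require Import all_boot.
Set Implicit Arguments. Unset Strict Implicit. Unset Printing Implicit Defensive.

(* Fix a vertex x of P. Every vertex y of comp(P) in L_{<= i} descends along
   BFS parents, inside G[L_{>= k}], to a vertex z of L_k in dist(s, y) - k
   steps; z lies in the same part as x, so d(x, z) <= l. Hence y lies in the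
   ball of radius l + (i - k) around x. Each sphere around x is at most D
   times larger than the previous one, so for D >= 2 a ball of radius n has
   fewer than D^(n+1) vertices. *)

Section Balls.
Variables (T : finType) (e : rel T).

Lemma ball_subset_succ n u : ball e n u \subset ball e n.+1 u.
Proof. exact: subsetUl. Qed.

Lemma ball_subset m n u : m <= n -> ball e m u \subset ball e n u.
Proof.
elim: n => [|n IHn]; first by rewrite leqn0 => /eqP ->.
rewrite leq_eqVlt => /orP [/eqP -> // | lt_mn].
exact: subset_trans (IHn lt_mn) (ball_subset_succ n u).
Qed.

Lemma ball_center n u : u \in ball e n u.
Proof. by apply: (subsetP (ball_subset u (leq0n n))); rewrite inE. Qed.

Lemma ball_succ_edge n u w y : w \in ball e n u -> e w y -> y \in ball e n.+1 u.
Proof.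
by move=> w_in wy; rewrite inE; apply/orP; right; rewrite inE; apply/existsP; exists w; rewrite w_in.
Qed.

Lemma ball_add a b x z y :
  z \in ball e a x -> y \in ball e b z -> y \in ball e (a + b) x.
Proof.
move=> z_in; elim: b y => [|b IHb] y /=; first by rewrite inE addn0 => /eqP ->.
rewrite addnS inE => /orP [y_in | ].
  exact: (subsetP (ball_subset_succ _ _)) (IHb _ y_in).
rewrite inE => /existsP [w /andP [w_in wy]].
exact: ball_succ_edge (IHb _ w_in) wy.
Qed.

Lemma ball_path_last u p : path e u p -> last u p \in ball e (size p) u.
Proof.
elim/last_ind: p => [|p x IHp]; first by rewrite inE.
rewrite rcons_path last_rcons size_rcons => /andP [up px].
exact: ball_succ_edge (IHp up) px.
Qed.

(* A shortest path is duplicate-free, hence has fewer than #|T| edges. *)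
Lemma connect_ball u v : connect e u v -> exists2 n, n < #|T| & v \in ball e n u.
Proof.
case/connectP=> p up ->; case: (shortenP up) => q uq q_uniq _.
exists (size q); last exact: ball_path_last.
by have /= <- := card_uniqP q_uniq; apply: max_card.
Qed.

Lemma dist_le_radius u v n : v \in ball e n u -> dist e u v <= n.
Proof.
move=> v_in; rewrite /dist; case: (ltnP n #|T|) => n_lt.
  rewrite leqNgt; apply/negP => /(before_find 0).
  by rewrite nth_iota // add0n v_in.
by apply: leq_trans n_lt; rewrite -[X in _ <= X](size_iota 0) find_size.
Qed.

Lemma mem_ball_dist u v : connect e u v -> v \in ball e (dist e u v) u.
Proof.
case/connect_ball=> n n_lt v_in.
have has_radius : has (fun n => v \in ball e n u) (iota 0 #|T|).
  by apply/hasP; exists n; rewrite ?mem_iota.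
have := nth_find 0 has_radius; rewrite nth_iota ?add0n //.
by move: has_radius; rewrite has_find size_iota.
Qed.

Definition sphere n u : {set T} :=
  if n is m.+1 then ball e n u :\: ball e m u else ball e 0 u.

Definition neighbours (A : {set T}) : {set T} := \bigcup_(x in A) [set y | e x y].

Lemma ball_succ_diff_sub n u :
  ball e n.+1 u :\: ball e n u \subset neighbours (sphere n u).
Proof.
apply/subsetP => y; rewrite inE => /andP [y_out].
rewrite inE (negbTE y_out) inE => /existsP [w /andP [w_in wy]].
apply/bigcupP; exists w; last by rewrite inE.
case: n w_in y_out => [|m] w_in y_out //.
rewrite inE w_in andbT; apply: contra y_out => w_in'.
exact: ball_succ_edge w_in' wy.
Qed.

Variable D : nat.
Hypothesis degree_le : forall v, #|[set w | e v w]| <= D.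

Lemma card_neighbours A : #|neighbours A| <= #|A| * D.
Proof.
rewrite -sum_nat_const; apply: (@leq_trans (\sum_(x in A) #|[set y | e x y]|)); last first.
  by apply: leq_sum => x _; apply: degree_le.
apply: (big_rec2 (fun (U : {set T}) S => #|U| <= S)); first by rewrite cards0.
by move=> x U S _ US; apply: leq_trans (leq_card_setU _ _) (leq_add _ US).
Qed.

Lemma card_sphere n u : #|sphere n u| <= D ^ n.
Proof.
elim: n => [|n IHn]; first by rewrite cards1.
apply: leq_trans (subset_leq_card (ball_succ_diff_sub n u)) _.
by apply: leq_trans (card_neighbours _) _; rewrite expnSr leq_mul2r IHn orbT.
Qed.

Hypothesis D_ge2 : 2 <= D.

Lemma card_ball n u : #|ball e n u| < D ^ n.+1.
Proof.
elim: n => [|n IHn]; first by rewrite cards1 expn1.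
rewrite -(cardsID (ball e n u)) -addSn.
have double_le : D ^ n.+1 + D ^ n.+1 <= D ^ n.+2.
  by rewrite addnn -mul2n (expnS D n.+1) leq_mul2r D_ge2 orbT.
apply: leq_trans double_le; apply: leq_add; last exact: card_sphere n.+1 u.
exact: leq_ltn_trans (subset_leq_card (subsetIr _ _)) IHn.
Qed.

End Balls.

Lemma card_adj_le_max_degree (T : finType) (e : rel T) v :
  #|[set w | e v w]| <= max_degree e.
Proof. exact: (@leq_bigmax _ (fun v => #|[set w | e v w]|)). Qed.

Section Layers.
Variables (T : finType) (e : rel T) (s : T).

Lemma restr_sym k : symmetric e -> symmetric (restr e s k).
Proof. by move=> e_sym a b; rewrite /restr /= e_sym; case: (e b a); rewrite //= andbC. Qed.

Lemma connect_restr_layer_ge k a b :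
  connect (restr e s k) a b -> a \in layer_ge e s k -> b \in layer_ge e s k.
Proof.
case/connectP=> p + ->; elim: p a => [|c p IHp] a //= /andP [ac cp] _.
by apply: IHp cp _; case/and3P: ac.
Qed.

Lemma dist_le_layering_length u v : same_part e s u v -> dist e u v <= layering_length e s.
Proof.
move=> uv; apply: leq_trans (@leq_bigmax _ (fun u => \max_(v | same_part e s u v) dist e u v) u).
exact: (@leq_bigmax_cond _ _ (fun v => dist e u v)).
Qed.

Hypothesis e_conn : forall x y : T, connect e x y.

Lemma exists_bfs_parent n y :
  dist e s y = n.+1 -> exists2 w, dist e s w = n & e w y.
Proof.
move=> dy; move: (mem_ball_dist (e_conn s y)); rewrite dy inE.
case/orP=> [/dist_le_radius | ]; first by rewrite dy ltnn.
rewrite inE => /existsP [w /andP [w_in wy]]; exists w => //.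
apply/eqP; rewrite eqn_leq (dist_le_radius w_in) leqNgt; apply/negP => dw_lt.
have := dist_le_radius (ball_succ_edge (mem_ball_dist (e_conn s w)) wy).
by rewrite dy ltnS leqNgt dw_lt.
Qed.

Lemma descend_to_layer k m y : dist e s y = k + m ->
  exists2 z, z \in layer e s k & connect (restr e s k) z y /\ y \in ball e m z.
Proof.
elim: m y => [|m IHm] y dy.
  by exists y; [rewrite inE dy addn0 | split; [exact: connect0 | exact: ball_center]].
rewrite addnS in dy; have [w dw wy] := exists_bfs_parent dy.
have [z z_in [zw w_in]] := IHm w dw.
exists z => //; split; last exact: ball_succ_edge w_in wy.
apply: connect_trans zw (connect1 _).
by rewrite /restr /= wy !inE dw dy leq_addr ltnW // ltnS leq_addr.
Qed.

Hypothesis e_sym : symmetric e.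

Lemma part_comp_layer_le_sub_ball k x i : x \in layer e s k ->
  part_comp e s k [set y in layer e s k | connect (restr e s k) x y] :&: layer_le e s i
    \subset ball e (layering_length e s + (i - k)) x.
Proof.
move=> x_in; apply/subsetP => y; rewrite !inE.
case/andP=> /existsP [x' /andP [x'_in x'y] dy_le]; rewrite inE in x'_in.
case/andP: x'_in => x'_in xx'.
have k_le_dy : k <= dist e s y.
  by move: (connect_restr_layer_ge x'y); rewrite !inE; apply; move: x'_in; rewrite inE => /eqP ->.
have [z z_in [zy y_in]] := descend_to_layer (esym (subnKC k_le_dy)).
have restr_csym := sym_connect_sym (restr_sym k e_sym).
have xz : connect (restr e s k) x z.
  by apply: connect_trans (connect_trans xx' x'y) _; rewrite restr_csym.
have z_near : z \in ball e (layering_length e s) x.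
  apply: (subsetP (ball_subset e x (dist_le_layering_length _))) (mem_ball_dist (e_conn x z)).
  by move: x_in z_in; rewrite !inE /same_part => /eqP -> /eqP ->; rewrite eqxx.
apply: (subsetP (ball_subset e x _)) (ball_add z_near y_in).
by rewrite leq_add2l leq_sub2r.
Qed.

End Layers.

Theorem mainTheorem5 (T : finType) (e : rel T)
    (e_sym : symmetric e) (e_irr : irreflexive e)
    (e_conn : forall x y : T, connect e x y)
    (s : T) (l : nat)
    (hDelta : 2 <= max_degree e)
    (hl : layering_length e s <= l)
    (k : nat) (P : {set T}) (hP : is_part e s k P)
    (i : nat) (hik : k <= i) :
  #|part_comp e s k P :&: layer_le e s i| <= max_degree e ^ (l + (i - k) + 2).
Proof.
case: hP => x x_in ->.
apply: leq_trans (subset_leq_card (part_comp_layer_le_sub_ball e_conn e_sym i x_in)) _.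
apply: leq_trans (ltnW (card_ball (@card_adj_le_max_degree T e) hDelta _ x)) _.
by rewrite leq_pexp2l ?(leq_trans _ hDelta) // addn2 ltnS leqW // leq_add2r.
Qed.
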